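(* For every $\beta>1$ there is a constant $C(\beta)$ such that for all integers $j\ge1$, $$\sum_{l\ge1}\frac{1}{(1+|j-l|)(1+\ln l)^\beta}\le C(\beta).$$ *)

From Stdlib Require Import Reals.
From Coquelicot Require Import Coquelicot.
Open Scope R_scope.

(* The summand 1 / ((1 + |j - l|) (1 + ln l)^beta), with real exponent via Rpower
   (base 1 + ln l >= 1 > 0 for l >= 1). *)
Definition term7p1 (beta : R) (j l : nat) : R :=
  / ((1 + Rabs (INR j - INR l)) * Rpower (1 + ln (INR l)) beta).

From Stdlib Require Import Reals Lra.
From Coquelicot Require Import Coquelicot.
Open Scope R_scope.

(* For fixed j >= 1, every summand is bounded by the increment, from l - 1 to l, of a
   potential W = W_tail + W_bulk + W_head made of three nondecreasing parts, so the
   partial sums telescope to at most sup W - W(0):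
   - for l >= 2j, 1 + |j - l| >= l / 2 and the summand is at most twice the increment of
     -(1 + ln x)^(1 - beta) / (beta - 1), whose total variation on [1, oo) is 1 / (beta - 1);
   - for sqrt j <= l <= 2j, (1 + ln l)^beta >= (1 + ln j / 2)^beta and 1 / (1 + |j - l|)
     is at most twice the increment of sign(x - j) ln (1 + |x - j|), whose variation on
     [0, 2j] is at most 2 ln (1 + j) <= 2 (1 + ln j);
   - for l <= sqrt j, 1 + |j - l| >= sqrt j, so the summand is at most 1 / sqrt j, the
     increment of min(x, sqrt j) / sqrt j. *)

Lemma ln_le_sub_1 (y : R) : 0 < y -> ln y <= y - 1.
Proof.
  intros Hy.
  pose proof (exp_ineq1_le (ln y)) as H.
  rewrite exp_ln in H; lra.
Qed.

Lemma ln_sub_ge (a b : R) : 0 < a -> a <= b -> (b - a) / b <= ln b - ln a.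
Proof.
  intros Ha Hab.
  pose proof (ln_le_sub_1 (a / b) ltac:(apply Rdiv_lt_0_compat; lra)) as H.
  rewrite ln_div in H by lra.
  replace (a / b - 1) with (- ((b - a) / b)) in H by (field; lra).
  lra.
Qed.

Lemma ln_nonneg (x : R) : 1 <= x -> 0 <= ln x.
Proof. intros Hx. rewrite <- ln_1. apply ln_le; lra. Qed.

Lemma ln_succ_le (J : R) : 1 <= J -> ln (1 + J) <= 1 + ln J.
Proof.
  intros HJ.
  pose proof (ln_le_sub_1 ((1 + J) / J) ltac:(apply Rdiv_lt_0_compat; lra)) as H.
  rewrite ln_div in H by lra.
  replace ((1 + J) / J - 1) with (/ J) in H by (field; lra).
  assert (/ J <= 1) by (rewrite <- Rinv_1; apply Rinv_le_contravar; lra).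
  lra.
Qed.

Lemma Rpower_pos (x y : R) : 0 < Rpower x y.
Proof. apply exp_pos. Qed.

Lemma Rpower_sub_ge (beta u v : R) : 1 <= beta -> 0 < v <= u ->
  (beta - 1) * (u - v) / Rpower u beta <= Rpower v (1 - beta) - Rpower u (1 - beta).
Proof.
  intros Hb Huv.
  set (E := Rpower u (1 - beta)).
  assert (HE : 0 < E) by apply Rpower_pos.
  assert (HEu : Rpower u beta = u / E).
  { unfold E. apply (Rmult_eq_reg_l (Rpower u (1 - beta))); [| apply Rgt_not_eq, Rpower_pos].
    rewrite <- Rpower_plus. replace (1 - beta + beta) with 1 by ring.
    rewrite Rpower_1 by lra. field. apply Rgt_not_eq, Rpower_pos. }
  assert (Hv : Rpower v (1 - beta) = E * exp ((beta - 1) * (ln u - ln v))).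
  { unfold E, Rpower. rewrite <- exp_plus. f_equal. ring. }
  pose proof (exp_ineq1_le ((beta - 1) * (ln u - ln v))) as Hexp.
  pose proof (ln_sub_ge v u ltac:(lra) ltac:(lra)) as Hln.
  assert (HR : (beta - 1) * (u - v) / Rpower u beta = E * ((beta - 1) * ((u - v) / u))).
  { rewrite HEu. field. lra. }
  rewrite Hv, HR.
  assert (Hstep : (beta - 1) * ((u - v) / u) <= (beta - 1) * (ln u - ln v))
    by (apply Rmult_le_compat_l; lra).
  assert (E * ((beta - 1) * ((u - v) / u)) <= E * (exp ((beta - 1) * (ln u - ln v)) - 1))
    by (apply Rmult_le_compat_l; lra).
  lra.
Qed.

Definition log_antiderivative (beta x : R) : R :=
  Rpower (1 + ln x) (1 - beta) / (beta - 1).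

Lemma log_antiderivative_sub_ge (beta x y : R) : 1 < beta -> 1 <= y <= x ->
  (x - y) / (x * Rpower (1 + ln x) beta)
  <= log_antiderivative beta y - log_antiderivative beta x.
Proof.
  intros Hb Hxy.
  set (u := 1 + ln x). set (v := 1 + ln y).
  assert (Hv : 1 <= v) by (unfold v; pose proof (ln_nonneg y ltac:(lra)); lra).
  assert (Huv : (x - y) / x <= u - v)
    by (unfold u, v; pose proof (ln_sub_ge y x ltac:(lra) ltac:(lra)); lra).
  assert (Hvu : v <= u) by (unfold u, v; pose proof (ln_le y x ltac:(lra) ltac:(lra)); lra).
  pose proof (Rpower_sub_ge beta u v ltac:(lra) ltac:(lra)) as Hpow.
  assert (HR : 0 < Rpower u beta) by apply Rpower_pos.
  unfold log_antiderivative; fold u v.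
  apply Rle_trans with ((u - v) / Rpower u beta).
  - replace ((x - y) / (x * Rpower u beta)) with ((x - y) / x / Rpower u beta)
      by (field; lra).
    apply Rmult_le_compat_r; [left; apply Rinv_0_lt_compat|]; lra.
  - apply (Rmult_le_reg_l (beta - 1)); [lra|].
    replace ((beta - 1) * (Rpower v (1 - beta) / (beta - 1) - Rpower u (1 - beta) / (beta - 1)))
      with (Rpower v (1 - beta) - Rpower u (1 - beta)) by (field; lra).
    replace ((beta - 1) * ((u - v) / Rpower u beta)) with ((beta - 1) * (u - v) / Rpower u beta)
      by (field; lra).
    exact Hpow.
Qed.

Definition signed_log_distance (J x : R) : R :=
  if Rle_dec x J then - ln (1 + J - x) else ln (1 + x - J).

Lemma signed_log_distance_le_compat (J x y : R) : x <= y ->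
  signed_log_distance J x <= signed_log_distance J y.
Proof.
  intros Hxy. unfold signed_log_distance.
  destruct (Rle_dec x J), (Rle_dec y J).
  - pose proof (ln_le (1 + J - y) (1 + J - x) ltac:(lra) ltac:(lra)). lra.
  - pose proof (ln_nonneg (1 + J - x) ltac:(lra)).
    pose proof (ln_nonneg (1 + y - J) ltac:(lra)). lra.
  - lra.
  - pose proof (ln_le (1 + x - J) (1 + y - J) ltac:(lra) ltac:(lra)). lra.
Qed.

Lemma inv_dist_le_signed_log_distance_step (J x : R) :
  / (1 + Rabs (J - x)) <= 2 * (signed_log_distance J x - signed_log_distance J (x - 1)).
Proof.
  unfold signed_log_distance.
  destruct (Rle_dec x J), (Rle_dec (x - 1) J); try lra.
  - rewrite Rabs_pos_eq by lra.
    replace (1 + J - (x - 1)) with (2 + J - x) by ring.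
    pose proof (ln_sub_ge (1 + J - x) (2 + J - x) ltac:(lra) ltac:(lra)).
    replace ((2 + J - x - (1 + J - x)) / (2 + J - x)) with (/ (2 + J - x)) in H by (field; lra).
    assert (/ (1 + (J - x)) <= 2 * / (2 + J - x)).
    { apply (Rmult_le_reg_l ((1 + (J - x)) * (2 + J - x))); [nra|].
      replace ((1 + (J - x)) * (2 + J - x) * / (1 + (J - x))) with (2 + J - x) by (field; lra).
      replace ((1 + (J - x)) * (2 + J - x) * (2 * / (2 + J - x))) with (2 * (1 + (J - x)))
        by (field; lra).
      lra. }
    lra.
  - (* x - 1 <= J < x: the step crosses J, and (1 + t) (2 - t) >= 2 for t = x - J in [0, 1] *)
    rewrite Rabs_left by lra.
    replace (1 + J - (x - 1)) with (2 + J - x) by ring.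
    set (P := (1 + x - J) * (2 + J - x)).
    assert (HP : 2 <= P) by (unfold P; nra).
    assert (Hln : ln (1 + x - J) + ln (2 + J - x) = ln P) by (unfold P; rewrite ln_mult; lra).
    pose proof (ln_sub_ge 1 P ltac:(lra) ltac:(lra)) as H. rewrite ln_1 in H.
    assert (1 / 2 <= (P - 1) / P).
    { apply (Rmult_le_reg_l (2 * P)); [lra|].
      replace (2 * P * (1 / 2)) with P by field.
      replace (2 * P * ((P - 1) / P)) with (2 * (P - 1)) by (field; lra). lra. }
    assert (/ (1 + - (J - x)) <= 1).
    { rewrite <- Rinv_1. apply Rinv_le_contravar; lra. }
    lra.
  - rewrite Rabs_left by lra.
    replace (1 + (x - 1) - J) with (x - J) by ring.
    pose proof (ln_sub_ge (x - J) (1 + x - J) ltac:(lra) ltac:(lra)).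
    replace ((1 + x - J - (x - J)) / (1 + x - J)) with (/ (1 + x - J)) in H by (field; lra).
    replace (1 + - (J - x)) with (1 + x - J) by ring.
    assert (0 < / (1 + x - J)) by (apply Rinv_0_lt_compat; lra).
    lra.
Qed.

Definition summand (beta J x : R) : R :=
  / ((1 + Rabs (J - x)) * Rpower (1 + ln x) beta).

Lemma summand_pos (beta J x : R) : 0 < summand beta J x.
Proof.
  apply Rinv_0_lt_compat, Rmult_lt_0_compat; [|apply Rpower_pos].
  pose proof (Rabs_pos (J - x)); lra.
Qed.

Definition tail_potential (beta x : R) : R := - 2 * log_antiderivative beta (Rmax 1 x).

Definition bulk_potential (beta J x : R) : R :=
  2 * signed_log_distance J (Rmin x (2 * J)) / Rpower (1 + ln J / 2) beta.

Definition head_potential (J x : R) : R := Rmin x (sqrt J) / sqrt J.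

Definition potential (beta J x : R) : R :=
  tail_potential beta x + bulk_potential beta J x + head_potential J x.

Lemma tail_potential_le_compat (beta x y : R) : 1 < beta -> x <= y ->
  tail_potential beta x <= tail_potential beta y.
Proof.
  intros Hb Hxy. unfold tail_potential.
  assert (Hm : 1 <= Rmax 1 x <= Rmax 1 y)
    by (split; [apply Rmax_l | apply Rle_max_compat_l; exact Hxy]).
  pose proof (log_antiderivative_sub_ge beta (Rmax 1 y) (Rmax 1 x) Hb Hm) as H.
  assert (0 <= (Rmax 1 y - Rmax 1 x) / (Rmax 1 y * Rpower (1 + ln (Rmax 1 y)) beta)).
  { apply Rdiv_le_0_compat; [lra|].
    apply Rmult_lt_0_compat; [lra | apply Rpower_pos]. }
  lra.
Qed.

Lemma bulk_potential_le_compat (beta J x y : R) : x <= y ->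
  bulk_potential beta J x <= bulk_potential beta J y.
Proof.
  intros Hxy. unfold bulk_potential, Rdiv.
  apply Rmult_le_compat_r; [left; apply Rinv_0_lt_compat, Rpower_pos|].
  apply Rmult_le_compat_l; [lra|].
  apply signed_log_distance_le_compat, Rle_min_compat_r, Hxy.
Qed.

Lemma head_potential_le_compat (J x y : R) : 0 < J -> x <= y ->
  head_potential J x <= head_potential J y.
Proof.
  intros HJ Hxy. unfold head_potential, Rdiv.
  apply Rmult_le_compat_r; [left; apply Rinv_0_lt_compat, sqrt_lt_R0, HJ|].
  apply Rle_min_compat_r, Hxy.
Qed.

Lemma summand_le_inv_dist (beta J x : R) : 0 <= beta -> 1 <= x ->
  summand beta J x <= / (1 + Rabs (J - x)).
Proof.
  intros Hb Hx. unfold summand.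
  assert (HA : 0 < 1 + Rabs (J - x)) by (pose proof (Rabs_pos (J - x)); lra).
  assert (HR : 1 <= Rpower (1 + ln x) beta).
  { pose proof (ln_nonneg x Hx) as Hln.
    pose proof (Rle_Rpower (1 + ln x) 0 beta ltac:(lra) Hb) as Hpow.
    rewrite Rpower_O in Hpow by lra. exact Hpow. }
  apply Rinv_le_contravar; nra.
Qed.

Lemma summand_le_tail_step (beta J x : R) : 1 < beta -> 1 <= J -> 2 * J <= x ->
  summand beta J x <= tail_potential beta x - tail_potential beta (x - 1).
Proof.
  intros Hb HJ Hx.
  unfold tail_potential.
  rewrite (Rmax_right 1 x), (Rmax_right 1 (x - 1)) by lra.
  pose proof (log_antiderivative_sub_ge beta x (x - 1) Hb ltac:(lra)) as H.
  replace (x - (x - 1)) with 1 in H by ring.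
  set (R := Rpower (1 + ln x) beta) in *.
  assert (HR : 0 < R) by apply Rpower_pos.
  assert (summand beta J x <= 2 * (1 / (x * R))).
  { unfold summand; fold R. rewrite Rabs_left1 by lra.
    replace (2 * (1 / (x * R))) with (/ (x / 2 * R)) by (field; lra).
    apply Rinv_le_contravar; [apply Rmult_lt_0_compat |]; nra. }
  lra.
Qed.

Lemma summand_le_bulk_step (beta J x : R) : 1 <= beta -> 1 <= J -> 1 <= x ->
  J <= x * x -> x <= 2 * J ->
  summand beta J x <= bulk_potential beta J x - bulk_potential beta J (x - 1).
Proof.
  intros Hb HJ Hx HJx HxJ.
  unfold bulk_potential.
  rewrite (Rmin_left x), (Rmin_left (x - 1)) by lra.
  pose proof (inv_dist_le_signed_log_distance_step J x) as Hstep.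
  set (c := Rpower (1 + ln J / 2) beta).
  assert (Hc : 0 < c) by apply Rpower_pos.
  assert (HlnJ : ln J <= 2 * ln x).
  { replace (2 * ln x) with (ln (x * x)) by (rewrite ln_mult by lra; ring).
    apply ln_le; lra. }
  assert (HcR : c <= Rpower (1 + ln x) beta).
  { apply Rle_Rpower_l; [lra|]. pose proof (ln_nonneg J HJ). lra. }
  assert (HA : 0 < / (1 + Rabs (J - x)))
    by (apply Rinv_0_lt_compat; pose proof (Rabs_pos (J - x)); lra).
  unfold summand. rewrite Rinv_mult.
  apply Rle_trans with (/ (1 + Rabs (J - x)) * / c).
  - apply Rmult_le_compat_l; [lra|]. apply Rinv_le_contravar; lra.
  - unfold Rdiv. rewrite <- Rmult_minus_distr_r.
    apply Rmult_le_compat_r; [left; apply Rinv_0_lt_compat; lra | lra].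
Qed.

Lemma summand_le_head_step (beta J x : R) : 0 <= beta -> 1 <= x -> x * x <= J ->
  summand beta J x <= head_potential J x - head_potential J (x - 1).
Proof.
  intros Hb Hx HxJ.
  set (s := sqrt J).
  assert (Hss : s * s = J) by (apply sqrt_sqrt; nra).
  assert (Hxs : x <= s).
  { unfold s. rewrite <- (sqrt_square x) by lra. apply sqrt_le_1_alt, HxJ. }
  unfold head_potential; fold s.
  rewrite (Rmin_left x), (Rmin_left (x - 1)) by lra.
  replace (x / s - (x - 1) / s) with (/ s) by (field; lra).
  apply Rle_trans with (/ (1 + Rabs (J - x))); [apply summand_le_inv_dist; lra|].
  apply Rinv_le_contravar; [lra|].
  pose proof (Rle_abs (J - x)). nra.
Qed.

Lemma summand_le_potential_step (beta J x : R) : 1 < beta -> 1 <= J -> 1 <= x ->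
  summand beta J x <= potential beta J x - potential beta J (x - 1).
Proof.
  intros Hb HJ Hx.
  pose proof (tail_potential_le_compat beta (x - 1) x Hb ltac:(lra)).
  pose proof (bulk_potential_le_compat beta J (x - 1) x ltac:(lra)).
  pose proof (head_potential_le_compat J (x - 1) x ltac:(lra) ltac:(lra)).
  unfold potential.
  destruct (Rle_dec (2 * J) x) as [Hfar | Hnear].
  - pose proof (summand_le_tail_step beta J x Hb HJ Hfar). lra.
  - destruct (Rle_dec J (x * x)) as [Hbulk | Hhead].
    + pose proof (summand_le_bulk_step beta J x ltac:(lra) HJ Hx Hbulk ltac:(lra)). lra.
    + pose proof (summand_le_head_step beta J x ltac:(lra) Hx ltac:(lra)). lra.
Qed.

Lemma tail_potential_sub_le (beta x : R) : 1 < beta ->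
  tail_potential beta x - tail_potential beta 0 <= 2 / (beta - 1).
Proof.
  intros Hb. unfold tail_potential, log_antiderivative.
  rewrite (Rmax_left 1 0), ln_1, Rplus_0_r by lra.
  unfold Rpower at 2. rewrite ln_1, Rmult_0_r, exp_0.
  assert (0 <= Rpower (1 + ln (Rmax 1 x)) (1 - beta) / (beta - 1)).
  { apply Rdiv_le_0_compat; [left; apply Rpower_pos | lra]. }
  replace (2 / (beta - 1)) with (2 * (1 / (beta - 1))) by (field; lra).
  lra.
Qed.

Lemma signed_log_distance_sub_le (J x : R) : 0 <= J -> 0 <= x <= 2 * J ->
  signed_log_distance J x - signed_log_distance J 0 <= 2 * ln (1 + J).
Proof.
  intros HJ Hx. unfold signed_log_distance.
  destruct (Rle_dec 0 J) as [_ | ]; [|lra].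
  replace (1 + J - 0) with (1 + J) by ring.
  destruct (Rle_dec x J).
  - pose proof (ln_nonneg (1 + J - x) ltac:(lra)).
    pose proof (ln_nonneg (1 + J) ltac:(lra)). lra.
  - pose proof (ln_le (1 + x - J) (1 + J) ltac:(lra) ltac:(lra)). lra.
Qed.

Lemma bulk_potential_sub_le (beta J x : R) : 1 <= beta -> 1 <= J -> 0 <= x ->
  bulk_potential beta J x - bulk_potential beta J 0 <= 8.
Proof.
  intros Hb HJ Hx. unfold bulk_potential.
  set (c := Rpower (1 + ln J / 2) beta).
  assert (Hln : 0 <= ln J) by (apply ln_nonneg, HJ).
  assert (Hc : 1 + ln J / 2 <= c).
  { unfold c. rewrite <- (Rpower_1 (1 + ln J / 2)) at 1 by lra. apply Rle_Rpower; lra. }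
  assert (Hm : 0 <= Rmin x (2 * J) <= 2 * J)
    by (split; [apply Rmin_glb | apply Rmin_r]; lra).
  pose proof (signed_log_distance_sub_le J _ ltac:(lra) Hm) as Hd.
  rewrite (Rmin_left 0) by lra.
  pose proof (ln_succ_le J HJ).
  replace (2 * signed_log_distance J (Rmin x (2 * J)) / c - 2 * signed_log_distance J 0 / c)
    with (2 * (signed_log_distance J (Rmin x (2 * J)) - signed_log_distance J 0) / c)
    by (field; lra).
  apply (Rmult_le_reg_r c); [lra|].
  replace (2 * (signed_log_distance J (Rmin x (2 * J)) - signed_log_distance J 0) / c * c)
    with (2 * (signed_log_distance J (Rmin x (2 * J)) - signed_log_distance J 0))
    by (field; lra).
  lra.
Qed.

Lemma head_potential_sub_le (J x : R) : 0 < J -> 0 <= x ->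
  head_potential J x - head_potential J 0 <= 1.
Proof.
  intros HJ Hx. unfold head_potential.
  assert (Hs : 0 < sqrt J) by (apply sqrt_lt_R0, HJ).
  rewrite (Rmin_left 0) by lra.
  pose proof (Rmin_r x (sqrt J)).
  apply (Rmult_le_reg_r (sqrt J)); [lra|].
  replace ((Rmin x (sqrt J) / sqrt J - 0 / sqrt J) * sqrt J) with (Rmin x (sqrt J))
    by (field; lra).
  lra.
Qed.

Lemma potential_sub_le (beta J x : R) : 1 < beta -> 1 <= J -> 0 <= x ->
  potential beta J x - potential beta J 0 <= 2 / (beta - 1) + 9.
Proof.
  intros Hb HJ Hx. unfold potential.
  pose proof (tail_potential_sub_le beta x Hb).
  pose proof (bulk_potential_sub_le beta J x ltac:(lra) HJ Hx).
  pose proof (head_potential_sub_le J x ltac:(lra) Hx).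
  lra.
Qed.

Lemma sum_n_le_telescoping (a W : nat -> R) :
  (forall n, a n <= W (S n) - W n) -> forall N, sum_n a N <= W (S N) - W O.
Proof.
  intros H N. induction N as [|N IH].
  - rewrite sum_O. apply H.
  - rewrite sum_Sn. unfold plus; simpl. specialize (H (S N)). lra.
Qed.

Lemma series_le_of_sum_n_le (a : nat -> R) (C : R) :
  (forall n, 0 <= a n) -> (forall N, sum_n a N <= C) ->
  ex_series a /\ Series a <= C.
Proof.
  intros Ha HC.
  assert (Hinc : forall n, sum_n a n <= sum_n a (S n)).
  { intros n. rewrite sum_Sn. unfold plus; simpl. specialize (Ha (S n)). lra. }
  destruct (ex_finite_lim_seq_incr _ C Hinc HC) as [l Hl].
  split; [exists l; exact Hl|].
  rewrite (is_series_unique a l Hl).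
  exact (is_lim_seq_le _ _ _ _ HC Hl (is_lim_seq_const C)).
Qed.

(* sum over l >= 1 is written with the shifted index l = n + 1 *)
Theorem lemma7p1 (beta : R) (hbeta : 1 < beta) :
  exists C : R, forall j : nat, (1 <= j)%nat ->
    ex_series (fun n : nat => term7p1 beta j (S n)) /\
    Series (fun n : nat => term7p1 beta j (S n)) <= C.
Proof.
  exists (2 / (beta - 1) + 9).
  intros j Hj.
  assert (HJ : 1 <= INR j) by (apply (le_INR 1), Hj).
  change (fun n => term7p1 beta j (S n)) with (fun n => summand beta (INR j) (INR (S n))).
  apply series_le_of_sum_n_le; [intros n; left; apply summand_pos|].
  intros N. eapply Rle_trans.
  - apply (sum_n_le_telescoping _ (fun n => potential beta (INR j) (INR n))).
    intros n. replace (INR n) with (INR (S n) - 1) by (rewrite S_INR; ring).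
    apply summand_le_potential_step; [exact hbeta | exact HJ |].
    rewrite S_INR. pose proof (pos_INR n). lra.
  - apply potential_sub_le; [exact hbeta | exact HJ | apply pos_INR].
Qed.
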